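(* Let $G$ be a finite simple graph of order $n$ and size $m$ whose adjacency matrix $A(G)$ is non-singular. Let $\mu_1\ge\mu_2$ be the two largest values among $|\lambda_1|,\dots,|\lambda_n|$ (counted with multiplicity), where $\lambda_1,\dots,\lambda_n$ are the eigenvalues of $A(G)$. Then \[\mathcal{E}(G)\geq \mu_1+(n-1)\left(\sqrt{\mu_2^2+2\mu_2\sqrt[n-1]{\frac{|\det A(G)|}{\mu_1}}+\frac{2m-\mu_1^2}{n-1}}-\mu_2\right).\]
   Context: For a finite simple graph $G$, $A(G)$ is its adjacency matrix with eigenvalues $\lambda_1\ge\cdots\ge\lambda_n$, and the energy is $\mathcal{E}(G)=\sum_{i=1}^n|\lambda_i|$. Note $\mu_1=\lambda_1$ and $\mu_2=\max(\lambda_2,-\lambda_n)$. $G$ is non-singular if $A(G)$ is non-singular. *)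

From HB Require Import structures.
From mathcomp Require Import all_boot all_order all_algebra.
From mathcomp Require Import reals exp.
Set Implicit Arguments. Unset Strict Implicit. Unset Printing Implicit Defensive.
Import Order.TTheory GRing.Theory Num.Theory.
Local Open Scope ring_scope.

Definition simple_graph (n : nat) (e : rel 'I_n) : Prop :=
  (forall i j, e i j = e j i) /\ (forall i, ~~ e i i).

Definition adjmx (R : nzRingType) (n : nat) (e : rel 'I_n) : 'M[R]_n :=
  \matrix_(i, j) (e i j)%:R.

Definition nedges (n : nat) (e : rel 'I_n) : nat :=
  #|[set p : 'I_n * 'I_n | e p.1 p.2 && (p.1 < p.2)%N]|.

(* lam lists the eigenvalues of A with multiplicity: the characteristic
   polynomial of A splits as prod_i (X - lam_i). *)
Definition eigenvalues_of (R : comNzRingType) (n : nat) (A : 'M[R]_n)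
  (lam : 'I_n -> R) : Prop :=
  char_poly A = \prod_(i < n) ('X - (lam i)%:P).

Definition energy (R : numDomainType) (n : nat) (lam : 'I_n -> R) : R :=
  \sum_(i < n) `|lam i|.

Definition abs_sorted (R : realDomainType) (n : nat) (lam : 'I_n -> R) : seq R :=
  sort (fun x y : R => y <= x) [seq `|lam i| | i <- enum 'I_n].

Definition mu1 (R : realDomainType) (n : nat) (lam : 'I_n -> R) : R :=
  (abs_sorted lam)`_0.
Definition mu2 (R : realDomainType) (n : nat) (lam : 'I_n -> R) : R :=
  (abs_sorted lam)`_1.

(* Split off the largest absolute eigenvalue mu1; the remaining k = n - 1
   values x_i lie in (0, mu2], have product |det A| / mu1 and sum of squares
   tr(A^2) - mu1^2 = 2m - mu1^2.  For positive reals bounded by M, AM-GM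
   sharpens to  G <= A - Var / (2M)  (G, A the geometric and arithmetic means,
   Var the variance): sum the bound  ln x <= ln c + (x-c)/c - (x-c)^2/(2cM),
   valid on (0, M], at c := A - Var/(2M).  Since
   (A + M)^2 = M^2 + 2M(A - Var/(2M)) + (sum x_i^2)/k, this is exactly
   k (sqrt (M^2 + 2MG + (sum x_i^2)/k) - M) <= sum x_i, and the energy is
   mu1 + sum x_i. *)

From HB Require Import structures.
From mathcomp Require Import all_boot all_order all_algebra.
From mathcomp Require Import classical_sets functions reals exp topology normedtype derive.
From mathcomp Require Import ring lra.
Set Implicit Arguments. Unset Strict Implicit. Unset Printing Implicit Defensive.
Import Order.TTheory GRing.Theory Num.Theory.
Import numFieldNormedType.Exports.
Local Open Scope classical_set_scope.
Local Open Scope ring_scope.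

Lemma ln_le_quadratic (R : realType) (x c M : R) :
  0 < x -> x <= M -> 0 < c -> c <= M ->
  ln x <= ln c + (x - c) / c - (x - c) ^+ 2 / (2 * c * M).
Proof.
move=> x_gt0 x_leM c_gt0 c_leM; have M_gt0 : 0 < M := lt_le_trans c_gt0 c_leM.
pose p : {poly R} := (- c^-1) *: 'X + (2 * c * M)^-1 *: ('X - c%:P) ^+ 2.
pose h : R -> R := @ln R + horner p.
have hE y : h y = ln y - y / c + (y - c) ^+ 2 / (2 * c * M).
  by rewrite /h /p addrfctE /= !hornerE /=; ring.
(* h is maximal at c on (0, M]. *)
have h'E (y : R) : 0 < y -> is_derive y 1 h ((c - y) * (M - y) / (y * c * M)).
  move=> y0; have -> : (c - y) * (M - y) / (y * c * M) = y^-1 + p^`().[y].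
    by rewrite /p !poly.derivE !hornerE /=; field; rewrite !gt_eqF.
  exact: is_deriveD (is_derive1_ln y0) (is_derive_poly p y).
have h_derivable (a b : R) : 0 < a -> {in `]a, b[, forall y, derivable h y 1}.
  by move=> a0 y; rewrite in_itv /= => /andP[/(lt_trans a0)/h'E[]].
have h'_itv (a b : R) y : 0 < a -> y \in `]a, b[ ->
    derive1 h y = (c - y) * (M - y) / (y * c * M).
  move=> a0; rewrite in_itv /= => /andP[/(lt_trans a0) y0 _].
  by have := h'E y y0; rewrite derive1E => ?; rewrite derive_val.
have h_cont (a b : R) : 0 < a -> {within `[a, b], continuous h}.
  move=> a0; apply: derivable_within_continuous => y.
  by rewrite in_itv /= => /andP[/(lt_le_trans a0)/h'E[]].
have h_le_hc : h x <= h c.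
  have [xc|cx] := leP x c.
  - have h'_ge0 y : y \in `]x, c[ -> 0 <= derive1 h y.
      move=> yI; rewrite (h'_itv _ _ _ x_gt0 yI); move: yI; rewrite in_itv /= => /andP[xy yc].
      have y_gt0 : 0 < y := lt_trans x_gt0 xy.
      by rewrite divr_ge0 ?mulr_ge0 ?subr_ge0 ?ltW // (lt_le_trans yc).
    by apply: (ger0_derive1_le_cc (h_derivable x c x_gt0) h'_ge0 (h_cont x c x_gt0));
      rewrite ?in_itv /= ?lexx ?xc.
  - have h'_le0 y : y \in `]c, x[ -> derive1 h y <= 0.
      move=> yI; rewrite (h'_itv _ _ _ c_gt0 yI); move: yI; rewrite in_itv /= => /andP[cy yx].
      rewrite -opprB mulNr mulNr oppr_le0.
      have y_gt0 : 0 < y := lt_trans c_gt0 cy.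
      by rewrite divr_ge0 ?mulr_ge0 ?subr_ge0 ?ltW // (lt_le_trans yx).
    by apply: (ler0_derive1_le_cc (h_derivable c x c_gt0) h'_le0 (h_cont c x c_gt0));
      rewrite ?in_itv /= ?lexx ?ltW.
move: h_le_hc; rewrite !hE subrr expr0n /= mul0r addr0.
have -> : (x - c) / c = x / c - 1 by field; rewrite gt_eqF.
by rewrite divff ?gt_eqF //; lra.
Qed.

Lemma big_seq_quadratic (R : comNzRingType) (t : seq R) (a b d : R) :
  \sum_(x <- t) (a + b * x + d * x ^+ 2) =
  (size t)%:R * a + b * \sum_(x <- t) x + d * \sum_(x <- t) x ^+ 2.
Proof.
elim: t => [|y t IH]; first by rewrite !big_nil mul0r !mulr0 !addr0.
by rewrite !big_cons IH /= mulrS; ring.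
Qed.

Lemma sqr_sum_le_size_mul_sum_sqr (R : realDomainType) (t : seq R) :
  (\sum_(x <- t) x) ^+ 2 <= (size t)%:R * \sum_(x <- t) x ^+ 2.
Proof.
set S := \sum_(x <- t) x; set Q := \sum_(x <- t) x ^+ 2; set k : R := (size t)%:R.
have inner x : \sum_(y <- t) (x - y) ^+ 2 = Q + (- 2 * S) * x + k * x ^+ 2.
  rewrite (eq_bigr (fun y => x ^+ 2 + (- 2 * x) * y + 1 * y ^+ 2)) => [|y _]; last by ring.
  by rewrite big_seq_quadratic -/S -/Q -/k; ring.
have : 0 <= \sum_(x <- t) \sum_(y <- t) (x - y) ^+ 2.
  by do 2![apply: sumr_ge0 => ? _]; exact: sqr_ge0.
rewrite (eq_bigr _ (fun x _ => inner x)) big_seq_quadratic -/S -/Q -/k.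
have -> : k * Q + -2 * S * S + k * Q = 2 * (k * Q - S ^+ 2) by ring.
by rewrite pmulr_rge0 // subr_ge0.
Qed.

Lemma ln_prod (R : realType) (t : seq R) : {in t, forall x, 0 < x} ->
  ln (\prod_(x <- t) x) = \sum_(x <- t) ln x.
Proof.
elim: t => [|y t IH] yt_gt0; first by rewrite !big_nil ln1.
have y_gt0 : 0 < y by apply: yt_gt0; exact: mem_head.
have t_gt0 : {in t, forall x, 0 < x} by move=> x xt; apply: yt_gt0; rewrite inE xt orbT.
by rewrite !big_cons lnM ?IH // posrE big_seq prodr_gt0.
Qed.

Section BoundedPositiveSeq.
Variables (R : realType) (t : seq R) (M : R).
Hypothesis t_neq0 : t != [::].
Hypothesis t_bounded : {in t, forall x, 0 < x <= M}.

Let k : R := (size t)%:R.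
Let S := \sum_(x <- t) x.
Let Q := \sum_(x <- t) x ^+ 2.

Let t_gt0 : {in t, forall x, 0 < x}.
Proof. by move=> x /t_bounded /andP[]. Qed.

Let t_leM : {in t, forall x, x <= M}.
Proof. by move=> x /t_bounded /andP[]. Qed.

Let k_gt0 : 0 < k.
Proof. by rewrite ltr0n lt0n size_eq0. Qed.

Let t_witness : exists2 x, x \in t & 0 < x.
Proof.
by case: t t_neq0 t_gt0 => // x s _ xs_gt0; exists x; rewrite ?xs_gt0 ?mem_head.
Qed.

Let M_gt0 : 0 < M.
Proof. by have [x xt x_gt0] := t_witness; exact: lt_le_trans x_gt0 (t_leM xt). Qed.

Let S_gt0 : 0 < S.
Proof.
have [x xt x_gt0] := t_witness.
have : 0 <= \sum_(y <- rem x t) y by rewrite big_seq sumr_ge0 // => y /mem_rem/t_gt0/ltW.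
by rewrite /S (big_rem x xt) /=; lra.
Qed.

Let Q_le : Q <= M * S.
Proof.
rewrite /Q /S mulr_sumr !big_seq ler_sum // => x xt.
by rewrite expr2 ler_pM2r ?t_gt0 ?t_leM.
Qed.

Let S_le : S <= k * M.
Proof.
have : S <= \sum_(x <- t) M by rewrite /S !big_seq ler_sum.
by rewrite big_const_seq count_predT iter_addr_0 -mulr_natl.
Qed.

Lemma powR_prod_le_mean_sub_var :
  powR (\prod_(x <- t) x) k^-1 <= S / k - (k * Q - S ^+ 2) / (2 * M * k ^+ 2).
Proof.
set c := S / k - _.
have c_eq : c = (2 * k * M * S - k * Q + S ^+ 2) / (2 * M * k ^+ 2).
  by rewrite /c; field; rewrite !gt_eqF.
have SQ := sqr_sum_le_size_mul_sum_sqr t; rewrite -/S -/Q -/k in SQ.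
have c_gt0 : 0 < c.
  rewrite c_eq divr_gt0 ?mulr_gt0 ?exprn_gt0 //.
  have : k * Q <= k * (M * S) by rewrite ler_pM2l.
  have : 0 < k * (M * S) by rewrite !mulr_gt0.
  have : 0 < S ^+ 2 by rewrite exprn_gt0.
  lra.
have c_le : c <= M.
  rewrite c_eq ler_pdivrMr ?mulr_gt0 ?exprn_gt0 //.
  have : 0 <= 2 * k * M * (k * M - S) by rewrite mulr_ge0 ?subr_ge0 // !mulr_ge0 // ltW.
  nra.
have sum_ln_le : \sum_(x <- t) ln x <= k * ln c.
  pose a := ln c - 1 - c / (2 * M); pose b := c^-1 + M^-1; pose d := - (2 * c * M)^-1.
  apply: (@le_trans _ _ (\sum_(x <- t) (a + b * x + d * x ^+ 2))).
    rewrite !big_seq ler_sum // => x xt.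
    have -> : a + b * x + d * x ^+ 2 = ln c + (x - c) / c - (x - c) ^+ 2 / (2 * c * M).
      by rewrite /a /b /d; field; rewrite !gt_eqF.
    by apply: ln_le_quadratic => //; [exact: t_gt0 | exact: t_leM].
  rewrite big_seq_quadratic -/k -/S -/Q.
  have -> : k * a + b * S + d * Q = k * ln c - (S - k * c) ^+ 2 / (2 * k * c * M).
    have N_neq0 : 2 * k * M * S - k * Q + S ^+ 2 != 0.
      by apply: contraTneq c_gt0 => N0; rewrite c_eq N0 mul0r ltxx.
    by rewrite /a /b /d c_eq; field; rewrite N_neq0 !gt_eqF.
  have : 0 <= (S - k * c) ^+ 2 / (2 * k * c * M).
    by rewrite divr_ge0 ?sqr_ge0 // ltW // !mulr_gt0.
  lra.
rewrite -ler_ln ?posrE ?powR_gt0 ?big_seq ?prodr_gt0 // ln_powR -big_seq ln_prod //.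
by rewrite mulrC ler_pdivrMr // mulrC.
Qed.

Lemma bounded_sum_lower_bound :
  k * (Num.sqrt (M ^+ 2 + 2 * M * powR (\prod_(x <- t) x) k^-1 + Q / k) - M) <= S.
Proof.
have mean_ge0 : 0 <= S / k + M by rewrite addr_ge0 ?divr_ge0 ?ltW.
have sqr_mean : (S / k + M) ^+ 2 =
    M ^+ 2 + 2 * M * (S / k - (k * Q - S ^+ 2) / (2 * M * k ^+ 2)) + Q / k.
  by field; rewrite !gt_eqF.
have sqrt_le : Num.sqrt (M ^+ 2 + 2 * M * powR (\prod_(x <- t) x) k^-1 + Q / k) <= S / k + M.
  rewrite -[leRHS]ger0_norm // -sqrtr_sqr ler_sqrt ?sqr_ge0 // sqr_mean.
  by rewrite lerD2r lerD2l ler_pM2l ?mulr_gt0 ?powR_prod_le_mean_sub_var.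
have -> : S = k * (S / k) by field; rewrite gt_eqF.
by rewrite ler_pM2l // lerBlDr.
Qed.

End BoundedPositiveSeq.

Lemma sorted_sum_lower_bound (R : realType) (s : seq R) :
  sorted (fun x y : R => y <= x) s -> {in s, forall x, 0 < x} ->
  let k := (size s).-1%:R in
  s`_0 + k * (Num.sqrt (s`_1 ^+ 2 + 2 * s`_1 * powR ((\prod_(x <- s) x) / s`_0) k^-1
                        + (\sum_(x <- s) x ^+ 2 - s`_0 ^+ 2) / k) - s`_1)
    <= \sum_(x <- s) x.
Proof.
case: s => [|x0 t] /= s_sorted s_gt0; first by rewrite mul0r addr0 big_nil.
have x0_gt0 : 0 < x0 by rewrite s_gt0 ?mem_head.
rewrite !big_cons [x0 * _]mulrC mulfK ?gt_eqF // (addrC (x0 ^+ 2)) addrK lerD2l.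
case: t s_sorted s_gt0 => [|x1 t] s_sorted s_gt0; first by rewrite mul0r big_nil.
apply: bounded_sum_lower_bound => // x xt; apply/andP; split.
  by rewrite s_gt0 // inE xt orbT.
move: xt; rewrite inE => /predU1P[-> //|xt].
have ge_trans : transitive (fun a b : R => b <= a) by move=> b a c ba cb; exact: le_trans cb ba.
by have /allP := order_path_min ge_trans (path_sorted s_sorted); apply.
Qed.

Section CharPolyRoots.
Variables (R : comNzRingType) (n : nat) (A : 'M[R]_n) (lam : 'I_n -> R).
Hypothesis A_eig : char_poly A = \prod_(i < n) ('X - (lam i)%:P).

Let char_poly_seqE :
  char_poly A = \prod_(x <- [seq lam i | i <- enum 'I_n]) ('X - x%:P).
Proof. by rewrite A_eig big_map big_enum. Qed.

Let size_lam : size [seq lam i | i <- enum 'I_n] = n.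
Proof. by rewrite size_map size_enum_ord. Qed.

Lemma det_eigenvalues : \det A = \prod_(i < n) lam i.
Proof.
have := char_poly_det A; rewrite char_poly_seqE coef0_prod_XsubC size_lam.
rewrite big_map big_enum /= => /(congr1 ( *%R ((-1) ^+ n))).
by rewrite !mulrA -!exprMn mulrNN mulr1 expr1n !mul1r => <-.
Qed.

Lemma mxtrace_eigenvalues : (0 < n)%N -> \tr A = \sum_(i < n) lam i.
Proof.
move=> n_gt0; apply: oppr_inj; rewrite -char_poly_trace // char_poly_seqE.
by rewrite -[X in _`_X.-1]size_lam coefPn_prod_XsubC ?size_lam -?lt0n // big_map big_enum.
Qed.

End CharPolyRoots.

Lemma char_poly_mulmx_self_comp (R : comNzRingType) n (A : 'M[R]_n) :
  char_poly (A *m A) \Po 'X^2 =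
  char_poly A * ((-1) ^+ n * (char_poly A \Po (- 'X))).
Proof.
(* X%:M commutes with A, so (X - A)(X + A) = X^2 - A^2 as polynomial matrices. *)
set Ap := map_mx (@polyC R) A.
have comp_char_poly_mx (q : {poly R}) (B : 'M[R]_n) :
    map_mx (comp_poly q) (char_poly_mx B) = q%:M - map_mx (@polyC R) B.
  apply/matrixP => i j; rewrite !mxE comp_polyB comp_polyC.
  by case: (i == j); rewrite /= ?mulr1n ?mulr0n ?comp_polyX ?comp_poly0.
rewrite /char_poly -!det_map_mx /= !comp_char_poly_mx.
have -> : (- 'X)%:M - Ap = - ('X%:M + Ap) by rewrite opprD raddfN.
rewrite -[- ('X%:M + Ap)]scaleN1r detZ [(-1) ^+ n * (_ * _)]mulrA -exprMn mulrNN.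
rewrite mulr1 expr1n mul1r -det_mulmx.
congr (\det _); rewrite mulmxBl !mulmxDr scalar_mxC -scalar_mxM map_mxM -/Ap.
rewrite opprD addrA; congr (_ - _).
by rewrite [Ap *m _]scalar_mxC addrK expr2.
Qed.

Lemma char_poly_mulmx_self (R : idomainType) n (A : 'M[R]_n) (lam : 'I_n -> R) :
  char_poly A = \prod_(i < n) ('X - (lam i)%:P) ->
  char_poly (A *m A) = \prod_(i < n) ('X - (lam i ^+ 2)%:P).
Proof.
move=> A_eig; have := char_poly_mulmx_self_comp A.
rewrite A_eig rmorph_prod /=.
have -> : \prod_(i < n) (('X - (lam i)%:P) \Po (- 'X)) =
          (-1) ^+ n * \prod_(i < n) ('X + (lam i)%:P).
  rewrite -[X in (-1) ^+ X](card_ord n) -prodrN; apply: eq_bigr => i _.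
  by rewrite comp_polyB comp_polyX comp_polyC opprD.
rewrite [(-1) ^+ n * (_ * _)]mulrA -exprMn mulrNN mulr1 expr1n mul1r -big_split /=.
have -> : \prod_(i < n) (('X - (lam i)%:P) * ('X + (lam i)%:P)) =
          (\prod_(i < n) ('X - (lam i ^+ 2)%:P)) \Po 'X^2.
  rewrite rmorph_prod; apply: eq_bigr => i _ /=.
  by rewrite comp_polyB comp_polyX comp_polyC rmorphXn /=; ring.
move=> comp_eq; apply/eqP; rewrite -subr_eq0 -(comp_poly_eq0 _ (q := 'X^2)).
  by rewrite comp_polyB comp_eq subrr.
by rewrite size_polyXn.
Qed.

Section SimpleGraph.
Variables (n : nat) (e : rel 'I_n).
Hypothesis e_simple : simple_graph e.

Lemma sum_adj_double_nedges :
  (\sum_(i < n) \sum_(j < n) e i j = 2 * nedges e)%N.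
Proof.
have [e_sym e_irr] := e_simple.
pose up (p : 'I_n * 'I_n) : nat := e p.1 p.2 && (p.1 < p.2)%N.
have up_swap p : e p.1 p.2 = up p + up (p.2, p.1) :> nat.
  case: p => i j; rewrite /up /= (e_sym j i).
  case: ltngtP => [_|_|/val_inj->]; rewrite ?andbT ?andbF; [by case: (e i j) | by case: (e i j) |].
  by rewrite (negbTE (e_irr j)).
have swap_inj : injective (fun p : 'I_n * 'I_n => (p.2, p.1)) by move=> [? ?] [? ?] [-> ->].
rewrite pair_bigA /= (eq_bigr _ (fun p _ => up_swap p)) big_split /=.
have -> : (\sum_p up (p.2, p.1) = \sum_p up p)%N by rewrite [RHS](reindex_inj swap_inj).
rewrite addnn -mul2n /nedges -sum1_card; congr (2 * _)%N.
by rewrite [RHS]big_mkcond; apply: eq_bigr => p _; rewrite inE /up; case: (_ && _).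
Qed.

Lemma mxtrace_adjmx_sqr (R : nzRingType) :
  \tr (adjmx R e *m adjmx R e) = 2 * (nedges e)%:R.
Proof.
have [e_sym _] := e_simple.
rewrite /mxtrace -[2]/(2%N%:R) -natrM -sum_adj_double_nedges natr_sum.
apply: eq_bigr => i _; rewrite mxE natr_sum; apply: eq_bigr => j _.
by rewrite !mxE (e_sym j i); case: (e i j); rewrite ?mulr1 ?mulr0.
Qed.

End SimpleGraph.

Section AbsSorted.
Variables (R : realDomainType) (n : nat) (lam : 'I_n -> R).

Lemma big_abs_sorted (T : Type) (idx : T) (op : Monoid.com_law idx) (F : R -> T) :
  \big[op/idx]_(x <- abs_sorted lam) F x = \big[op/idx]_(i < n) F `|lam i|.
Proof. by rewrite (perm_big _ (permEl (perm_sort _ _))) big_map big_enum. Qed.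

Lemma size_abs_sorted : size (abs_sorted lam) = n.
Proof. by rewrite size_sort size_map size_enum_ord. Qed.

Lemma sorted_abs_sorted : sorted (fun x y : R => y <= x) (abs_sorted lam).
Proof. by apply: sort_sorted => x y; exact: le_total. Qed.

Lemma abs_sorted_gt0 : (forall i, lam i != 0) -> {in abs_sorted lam, forall x, 0 < x}.
Proof. by move=> lam_neq0 x; rewrite mem_sort => /mapP[i _ ->]; rewrite normr_gt0. Qed.

End AbsSorted.

Theorem theorem3p2 (R : realType) (n : nat) (e : rel 'I_n) (lam : 'I_n -> R) :
  (0 < n)%N ->
  simple_graph e ->
  \det (adjmx R e) != 0 ->
  eigenvalues_of (adjmx R e) lam ->
  let m := nedges e in
  let m1 := mu1 lam in
  let m2 := mu2 lam in
  energy lam >=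
    m1 + (n.-1)%:R *
      (Num.sqrt (m2 ^+ 2
                 + 2 * m2 * powR (`|\det (adjmx R e)| / m1) (n.-1)%:R^-1
                 + (2 * m%:R - m1 ^+ 2) / (n.-1)%:R)
       - m2).
Proof.
move=> n_gt0 e_simple det_neq0 A_eig; cbv zeta.
have det_eq := det_eigenvalues A_eig.
have lam_neq0 i : lam i != 0.
  by move: det_neq0; rewrite det_eq prodf_seq_neq0 => /allP/(_ i (mem_index_enum i)).
have energy_eq : energy lam = \sum_(x <- abs_sorted lam) x by rewrite big_abs_sorted.
have det_abs_eq : `|\det (adjmx R e)| = \prod_(x <- abs_sorted lam) x.
  by rewrite big_abs_sorted det_eq normr_prod.
have nedges_eq : 2 * (nedges e)%:R = \sum_(x <- abs_sorted lam) x ^+ 2.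
  rewrite big_abs_sorted -(mxtrace_adjmx_sqr e_simple R).
  rewrite (mxtrace_eigenvalues (char_poly_mulmx_self A_eig) n_gt0).
  by apply: eq_bigr => i _; rewrite real_normK ?num_real.
rewrite energy_eq det_abs_eq nedges_eq /mu1 /mu2.
have := sorted_sum_lower_bound (sorted_abs_sorted lam) (abs_sorted_gt0 lam_neq0).
by rewrite size_abs_sorted.
Qed.
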